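(* Let $\mathbb{F}_q$ have characteristic prime to $6$, let $k/\mathbb{F}_q$ be a field, and let $v=\sum_{a\in\Phi_V}v_a\in V_k$. (1) Let $S\subset\{1,2,3,4\}$ be a two-element subset and suppose $v_a=0$ for every weight $a$ with $n_i(a)>0$ for each $i\in S$. Then $\Delta(v)=0$. (2) Suppose $v_a=0$ for every weight $a$ such that $n_i(a)<0$ for at most one $i\in\{1,2,3,4\}$. Then $\Delta(v)=0$.
   Context: Let $J$ be the $4\times4$ anti-diagonal matrix of $1$'s, $\Psi=\mathrm{diag}(J,J)$, $\mathrm{SO}_8$ the special orthogonal group over $\mathbb{F}_q$ of the form with Gram matrix $\Psi$, $H=\mathrm{SO}_8/\mu_2$, $\mathfrak{h}=\mathrm{Lie}\,H$, $\theta$ conjugation by $s=\mathrm{diag}(1,-1,-1,1,1,-1,-1,1)$, $G=(H^\theta)^\circ$, $V=\{Y\in\mathfrak{h}:sYs^{-1}=-Y\}$. $T$ is the image of the diagonal torus $\{\mathrm{diag}(a,b,b^{-1},a^{-1},c,d,d^{-1},c^{-1})\}$; in additive notation put $a_1=ac$, $a_2=a/c$, $a_3=bd$, $a_4=b/d$, and let $n_1,\dots,n_4\in X_*(T)_{\mathbb{Q}}$ be the dual basis. The set $\Phi_V$ of $T$-weights on $V$ consists of the $16$ characters $\frac12(\pm a_1\pm a_2\pm a_3\pm a_4)$, each with one-dimensional weight space, and $v_a$ is the component of $v$ in the $a$-weight space. $\Delta\in\mathbb{F}_q[V]^G$ is the restriction to $V$ of the discriminant of $\mathfrak{h}$ (the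 coefficient of $t^4$ in $\det(t-\mathrm{ad}\,Y)$). *)

From HB Require Import structures.
From mathcomp Require Import all_boot all_order all_algebra.
Set Implicit Arguments. Unset Strict Implicit. Unset Printing Implicit Defensive.
Import Order.TTheory GRing.Theory Num.Theory.
Local Open Scope ring_scope.

(* Gram matrix Psi = diag(J,J), J the 4x4 anti-diagonal matrix of 1's. *)
Definition Psi (k : fieldType) : 'M[k]_8 :=
  \matrix_(i < 8, j < 8)
    (((i < 4)%N == (j < 4)%N) && ((i %% 4 + j %% 4)%N == 3%N))%:R.

(* s = diag(1,-1,-1,1,1,-1,-1,1) : the sign s_i *)
Definition ssign (i : 'I_8) : bool := (* true iff s_i = 1 *)
  (i %% 4 == 0)%N || (i %% 4 == 3)%N.
Definition smat (k : fieldType) : 'M[k]_8 :=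
  \matrix_(i < 8, j < 8) ((i == j)%:R * (if ssign i then 1 else -1)).

(* Lie algebra so(Psi) (= Lie H, since char k <> 2) *)
Definition in_so (k : fieldType) (Y : 'M[k]_8) : bool :=
  Y^T *m Psi k + Psi k *m Y == 0.

(* V_k = {Y in h : s Y s^-1 = -Y}  (s^-1 = s) *)
Definition in_V (k : fieldType) (Y : 'M[k]_8) : bool :=
  in_so Y && (smat k *m Y *m smat k == - Y).

(* Coordinates n_m (m = 0..3 stands for n_1..n_4) of the character chi_i of T
   on the i-th basis vector, where t = diag(a,b,b^-1,a^-1,c,d,d^-1,c^-1) and
   a = ((a1+a2)/2), b = ((a3+a4)/2), c = ((a1-a2)/2), d = ((a3-a4)/2)
   additively. *)
Definition eps_a : 'I_4 -> rat := fun m => if (m <= 1)%N then 1/2 else 0.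
Definition eps_c : 'I_4 -> rat :=
  fun m => if (val m == 0)%N then 1/2 else if (val m == 1)%N then -(1/2) else 0.
Definition eps_b : 'I_4 -> rat := fun m => if (2 <= m)%N then 1/2 else 0.
Definition eps_d : 'I_4 -> rat :=
  fun m => if (val m == 2)%N then 1/2 else if (val m == 3)%N then -(1/2) else 0.

Definition chi (i : 'I_8) (m : 'I_4) : rat :=
  match val i with
  | 0 => eps_a m | 1 => eps_b m | 2 => - eps_b m | 3 => - eps_a m
  | 4 => eps_c m | 5 => eps_d m | 6 => - eps_d m | _ => - eps_c m
  end.

(* weights: elements of X_*(T)^dual, recorded by their coordinates n_1..n_4 *)
Definition weight := {ffun 'I_4 -> rat}.

(* the T-weight of the elementary matrix E_ij under conjugation *)
Definition wt (i j : 'I_8) : weight := [ffun m => chi i m - chi j m].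

Definition PhiV (a : weight) : bool :=
  [exists i : 'I_8, exists j : 'I_8, (ssign i != ssign j) && (wt i j == a)].

Definition wcomp (k : fieldType) (a : weight) (v : 'M[k]_8) : 'M[k]_8 :=
  \matrix_(i < 8, j < 8) (if wt i j == a then v i j else 0).

(* Basis of so(Psi): B_pq = Psi (E_pq - E_qp), p < q (28 elements);
   coordinates of Z in so(Psi) are (Psi Z)_pq, p < q. *)
Definition soIdx : seq ('I_8 * 'I_8) :=
  [seq ((inord p : 'I_8), (inord q : 'I_8)) |
     p <- iota 0 8, q <- iota p.+1 (7 - p)].
Definition soPair (n : 'I_28) : 'I_8 * 'I_8 := nth (ord0, ord0) soIdx n.

Definition soBasis (k : fieldType) (pq : 'I_8 * 'I_8) : 'M[k]_8 :=
  Psi k *m (delta_mx pq.1 pq.2 - delta_mx pq.2 pq.1).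

(* matrix of ad Y : h -> h in the above basis *)
Definition adMat (k : fieldType) (Y : 'M[k]_8) : 'M[k]_28 :=
  \matrix_(i < 28, j < 28)
    (Psi k *m (Y *m soBasis k (soPair j) - soBasis k (soPair j) *m Y))
      (soPair i).1 (soPair i).2.

Definition Delta (k : fieldType) (Y : 'M[k]_8) : k :=
  (char_poly (adMat Y))`_4.

From HB Require Import structures.
From mathcomp Require Import all_boot all_order all_algebra.
From mathcomp Require Import perm zify.
Import Order.TTheory GRing.Theory Num.Theory.
Local Open Scope ring_scope.
Set Implicit Arguments. Unset Strict Implicit. Unset Printing Implicit Defensive.

(* Delta v is the coefficient of t^4 in the characteristic polynomial of ad v
   on so_8 = g + V (dimension 28).  As v lies in V, ad v vanishes on the
   16 x 16 block V x V.  Under either hypothesis there is a grading of the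
   standard basis of so_8 for which ad v is block upper triangular, and a
   vector supported on g in the left kernel of its block-diagonal part; a
   count of the terms of the determinant then gives t^6 | char_poly (ad v).
   The gradings and kernel vectors were found by computer and are checked by
   evaluation: every entry involved is a signed sum of entries of v which
   cancels by the hypothesis on v and the antisymmetry
   v_xy = - v_(psi y)(psi x) of so(Psi). *)

Lemma all_iota_ord n (P : pred nat) : all P (iota 0 n) -> forall i : 'I_n, P i.
Proof. by move=> /allP P_iota i; apply: P_iota; rewrite mem_iota ltn_ord. Qed.

Lemma card_ord_count n (P : pred nat) : #|[set i : 'I_n | P i]| = count P (iota 0 n).
Proof. by rewrite cardsE cardE -val_enum_ord count_map size_filter enumT. Qed.

Lemma eq_opp_eq0 (R : idomainType) (x : R) : (2%:R : R) != 0 -> x = - x -> x = 0.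
Proof.
move=> two_neq0 /eqP; rewrite -subr_eq0 opprK -mulr2n -mulr_natr mulf_eq0.
by rewrite (negbTE two_neq0) orbF => /eqP.
Qed.

Lemma mul_mx_delta (R : pzSemiRingType) m n p (M : 'M[R]_(m, n)) (r : 'I_n) (s : 'I_p) i j :
  (M *m delta_mx r s) i j = M i r * (j == s)%:R.
Proof.
rewrite mxE (bigD1 r) //= mxE eqxx /= big1 ?addr0 // => l /negbTE ne_l.
by rewrite mxE ne_l mulr0.
Qed.

Lemma mul_delta_mx (R : pzSemiRingType) m n p (M : 'M[R]_(n, p)) (r : 'I_m) (s : 'I_n) i j :
  (delta_mx r s *m M) i j = (i == r)%:R * M s j.
Proof.
rewrite mxE (bigD1 s) //= mxE eqxx andbT big1 ?addr0 // => l /negbTE ne_l.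
by rewrite mxE ne_l andbF mul0r.
Qed.

Definition graded_part (R : nmodType) n (e : 'I_n -> nat) (A : 'M[R]_n) : 'M[R]_n :=
  \matrix_(i, j) (if e i == e j then A i j else 0).

Lemma det_graded_part (R : comNzRingType) n (e : 'I_n -> nat) (A : 'M[R]_n) :
  (forall i j, (e i < e j)%N -> A i j = 0) -> \det (graded_part e A) = \det A.
Proof.
move=> A_tri; apply: eq_bigr => s _; congr (_ * _).
case: (boolP [exists i, e i < e (s i)]%N) => [/existsP[i lt_i] | /existsPn ge_s].
  by rewrite (bigD1 i) //= [RHS](bigD1 i) //= mxE A_tri // ltn_eqF // !mul0r.
have le_s i : (e (s i) <= e i)%N by rewrite leqNgt ge_s.
have sum_s : (\sum_i e (s i) = \sum_i e i)%N.
  by rewrite [RHS](reindex_inj (@perm_inj _ s)).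
have := (leqif_sum (fun i (_ : predT i) => leqif_eq (le_s i))).2.
rewrite sum_s eqxx => /esym/forallP eq_s.
by apply: eq_bigr => i _; rewrite mxE (eqP (eq_s i)) eqxx.
Qed.

Lemma char_poly_graded_part (R : comNzRingType) n (e : 'I_n -> nat) (A : 'M[R]_n) :
  (forall i j, (e i < e j)%N -> A i j = 0) -> char_poly (graded_part e A) = char_poly A.
Proof.
move=> A_tri.
have neq_of_grade i j : e i != e j -> (i == j) = false.
  by move=> ne; apply: contraNF ne => /eqP ->.
rewrite /char_poly -[RHS](@det_graded_part _ _ e) => [|i j lt_ij]; last first.
  by rewrite !mxE A_tri // neq_of_grade ?ltn_eqF // mulr0n polyC0 subr0.
congr (\det _); apply/matrixP => i j; rewrite !mxE.
by case: (e i =P e j) => [// | /eqP ne]; rewrite neq_of_grade // mulr0n polyC0 subr0.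
Qed.

Lemma leq_card_fixed_perm n (s : {perm 'I_n}) (Q : {set 'I_n}) (i0 : 'I_n) :
  i0 \notin Q -> s i0 \notin Q -> (forall i, i \in Q -> s i \in Q -> s i = i) ->
  (#|Q|.*2.+2 - n <= #|i0 |: Q :&: [set i | s i == i]|)%N.
Proof.
move=> i0Q si0Q sQ.
have moved_out : s @: (i0 |: Q :\: [set i | s i == i]) \subset ~: Q.
  apply/subsetP => _ /imsetP[i /setU1P[-> | /setDP[iQ ne_si]] ->]; rewrite inE //.
  by apply: contra ne_si => siQ; rewrite inE sQ.
have := subset_leq_card moved_out.
rewrite card_imset; last exact: perm_inj.
have := cardsID [set i | s i == i] Q; have := cardsC Q; rewrite card_ord.
rewrite !cardsU1 !inE (negbTE i0Q) andbF /=.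
move: #|Q| #|~: Q| #|Q :&: _| #|Q :\: _| => a b f m; lia.
Qed.

Lemma dvdp_det_pow (F : fieldType) n (d : {poly F}) (N : 'M[{poly F}]_n)
    (Q : {set 'I_n}) (i0 : 'I_n) :
  i0 \notin Q ->
  (forall i j, i \in Q -> j \in Q -> i != j -> N i j = 0) ->
  (forall i, i \in Q -> d %| N i i) ->
  (forall j, j \in Q -> N i0 j = 0) ->
  (forall j, d %| N i0 j) ->
  d ^+ (#|Q|.*2.+2 - n) %| \det N.
Proof.
move=> i0Q NQQ dNQ Ni0Q dNi0.
apply: (big_ind (fun x => _ %| x)) => [||s _]; [exact: dvdp0 | exact: dvdp_add |].
apply: dvdp_mull.
case: (boolP [exists i, [&& i \in Q, s i \in Q & s i != i]]) => [|/existsPn sQ].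
  case/existsP=> i /and3P[iQ siQ ne_si].
  by rewrite (bigD1 i) //= NQQ 1?eq_sym // mul0r dvdp0.
case: (boolP (s i0 \in Q)) => [si0Q | si0Q].
  by rewrite (bigD1 i0) //= Ni0Q // mul0r dvdp0.
have fixQ i : i \in Q -> s i \in Q -> s i = i.
  by move=> iQ siQ; apply/eqP; have := sQ i; rewrite iQ siQ /= negbK.
rewrite (bigID [in i0 |: Q :&: [set i | s i == i]]) /= dvdp_mulr //.
apply: dvdp_trans (dvdp_exp2l d (leq_card_fixed_perm i0Q si0Q fixQ)) _.
rewrite -prodr_const; apply: (big_ind2 (fun a b => a %| b)) => // [? ? ? ?|i].
  exact: dvdp_mul.
case/setU1P=> [-> // | /setIP[iQ]]; rewrite inE => /eqP ->.
exact: dNQ.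
Qed.

Lemma dvdp_char_poly_left_kernel (F : fieldType) n (A : 'M[F]_n) (Q : {set 'I_n})
    (u : 'rV[F]_n) (i0 : 'I_n) :
  (forall i j, i \in Q -> j \in Q -> A i j = 0) ->
  u *m A = 0 -> u 0 i0 != 0 ->
  (forall j, j \in Q -> u 0 j = 0) -> (forall j : 'I_n, (i0 < j)%N -> u 0 j = 0) ->
  'X ^+ (#|Q|.*2.+2 - n) %| char_poly A.
Proof.
move=> AQQ uA ui0 uQ u_gt.
have i0Q : i0 \notin Q by apply: contra ui0 => /uQ ->.
have Q_neq_i0 i : i \in Q -> (i == i0) = false.
  by move=> iQ; apply: contraNF i0Q => /eqP <-.
pose U := \matrix_(i, j) (if i == i0 then u 0 j else (i == j)%:R) : 'M[F]_n.
have detU : \det U = u 0 i0.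
  rewrite det_trig; last first.
    apply/is_trig_mxP => i j lt_ij; rewrite mxE.
    by case: (i =P i0) lt_ij => [-> | _] lt_ij; [exact: u_gt | rewrite -val_eqE ltn_eqF].
  rewrite (bigD1 i0) //= big1 ?mulr1 => [|i /negbTE ne_i]; rewrite mxE ?eqxx //.
  by rewrite ne_i.
have UA i j : (U *m A) i j = if i == i0 then 0 else A i j.
  rewrite mxE; case: (i =P i0) => [-> | /eqP ne_i].
    have := congr1 (fun M : 'rV[F]_n => M 0 j) uA; rewrite !mxE => uAj.
    by rewrite -[RHS]uAj; apply: eq_bigr => l _; rewrite mxE eqxx.
  rewrite (bigD1 i) //= big1 ?addr0 => [|l ne_l]; rewrite mxE (negbTE ne_i).
    by rewrite eqxx mul1r.
  by rewrite eq_sym (negbTE ne_l) mul0r.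
pose N := map_mx polyC U *m char_poly_mx A.
have NE i j : N i j = 'X * (U i j)%:P - ((U *m A) i j)%:P.
  by rewrite /N mulmxBr mul_mx_scalar -map_mxM !mxE mulrC mul_polyC.
have: 'X ^+ (#|Q|.*2.+2 - n) %| \det N.
  apply: (dvdp_det_pow i0Q) => [i j iQ jQ ne_ij | i iQ | j jQ | j]; rewrite NE UA.
  - by rewrite mxE (negbTE ne_ij) Q_neq_i0 // AQQ // mulr0 subr0.
  - by rewrite mxE eqxx Q_neq_i0 // AQQ // mulr1 subr0.
  - by rewrite mxE !eqxx uQ // mulr0 subr0.
  - by rewrite mxE !eqxx subr0 dvdp_mulIl.
by rewrite det_mulmx det_map_mx detU mul_polyC dvdpZr.
Qed.

(* Index computations are carried out on [nat], since [inord] goes through an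
   opaque proof and blocks [vm_compute]. *)
Definition ssignN (x : nat) : bool := (x %% 4 == 0)%N || (x %% 4 == 3)%N.

Definition psiN (x : nat) : nat := (4 * (x %/ 4) + 3 - x %% 4)%N.

Lemma psiN_lt x : (x < 8)%N -> (psiN x < 8)%N.
Proof. by do 8?[case: x => [//|x]]. Qed.

Lemma psiNK x : (x < 8)%N -> psiN (psiN x) = x.
Proof. by do 8?[case: x => [//|x]]. Qed.

Definition psi_inv (i : 'I_8) : 'I_8 := inord (psiN i).

Lemma psi_invE x : (x < 8)%N -> psi_inv (inord x) = inord (psiN x).
Proof. by move=> lt_x8; rewrite /psi_inv inordK. Qed.

Lemma psi_invK : involutive psi_inv.
Proof. by move=> i; apply/val_inj; rewrite /psi_inv /= !inordK ?psiNK ?psiN_lt. Qed.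

Lemma PsiE (k : fieldType) : Psi k = \matrix_(i, j) (j == psi_inv i)%:R.
Proof.
have PsiN : all (fun x => all (fun y =>
    (((x < 4) == (y < 4)) && (x %% 4 + y %% 4 == 3))%N == (y == psiN x)) (iota 0 8)) (iota 0 8).
  by [].
apply/matrixP => i j; rewrite !mxE -val_eqE /= inordK ?psiN_lt //.
by rewrite (eqP (all_iota_ord (all_iota_ord PsiN i) j)).
Qed.

Lemma mul_Psi_mx (k : fieldType) (M : 'M[k]_8) i j : (Psi k *m M) i j = M (psi_inv i) j.
Proof.
rewrite PsiE mxE (bigD1 (psi_inv i)) //= mxE eqxx mul1r big1 ?addr0 // => l ne_l.
by rewrite mxE (negbTE ne_l) mul0r.
Qed.

Lemma mul_mx_Psi (k : fieldType) (M : 'M[k]_8) i j : (M *m Psi k) i j = M i (psi_inv j).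
Proof.
rewrite PsiE mxE (bigD1 (psi_inv j)) //= mxE psi_invK eqxx mulr1 big1 ?addr0 // => l ne_l.
by rewrite mxE eq_sym (can2_eq psi_invK psi_invK) (negbTE ne_l) mulr0.
Qed.

Lemma mul_smat_mx (k : fieldType) (M : 'M[k]_8) i j :
  (smat k *m M) i j = (if ssign i then 1 else -1) * M i j.
Proof.
rewrite mxE (bigD1 i) //= mxE eqxx mul1r big1 ?addr0 // => l /negbTE ne_l.
by rewrite mxE eq_sym ne_l !mul0r.
Qed.

Lemma mul_mx_smat (k : fieldType) (M : 'M[k]_8) i j :
  (M *m smat k) i j = M i j * (if ssign j then 1 else -1).
Proof.
rewrite mxE (bigD1 j) //= mxE eqxx mul1r big1 ?addr0 // => l /negbTE ne_l.
by rewrite mxE ne_l !mul0r mulr0.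
Qed.

Lemma ad_soBasis_entry (k : fieldType) (Y : 'M[k]_8) (p q r s : 'I_8) :
  (Psi k *m (Y *m soBasis k (r, s) - soBasis k (r, s) *m Y)) p q =
  (q == s)%:R * Y (psi_inv p) (psi_inv r) - (q == r)%:R * Y (psi_inv p) (psi_inv s)
  - (p == r)%:R * Y s q + (p == s)%:R * Y r q.
Proof.
have subE (A B : 'M[k]_8) i j : (A - B) i j = A i j - B i j by rewrite !mxE.
rewrite mul_Psi_mx /soBasis /= subE mulmxA mulmxBr subE !mul_mx_delta !mul_mx_Psi.
rewrite -mulmxA mulmxBl mul_Psi_mx psi_invK subE !mul_delta_mx.
by rewrite [Y _ (psi_inv r) * _]mulrC [Y _ (psi_inv s) * _]mulrC opprD opprK addrA.
Qed.

Definition soIdxN : seq (nat * nat) :=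
  [seq (p, q) | p <- iota 0 8, q <- iota p.+1 (7 - p)].
Definition soPairN (n : nat) : nat * nat := nth (0, 0)%N soIdxN n.

Lemma soPairE (n : 'I_28) : soPair n = (inord (soPairN n).1, inord (soPairN n).2).
Proof.
by rewrite /soPair (_ : soIdx = map (fun pq => (inord pq.1, inord pq.2)) soIdxN)
  ?(nth_map (0, 0)%N) //; case: n.
Qed.

Lemma soPairN_lt (n : 'I_28) : ((soPairN n).1 < 8)%N && ((soPairN n).2 < 8)%N.
Proof.
by apply: (all_iota_ord (P := fun n => ((soPairN n).1 < 8) && ((soPairN n).2 < 8))%N).
Qed.

Definition term := (int * (nat * nat))%type.
Definition lform := seq term.

Definition eval_lform (k : fieldType) (Y : 'M[k]_8) (l : lform) : k :=
  \sum_(t <- l) t.1%:~R * Y (inord t.2.1) (inord t.2.2).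

Definition ad_lform (i j : nat) : lform :=
  let p := (soPairN i).1 in let q := (soPairN i).2 in
  let r := (soPairN j).1 in let s := (soPairN j).2 in
  [:: ((q == s) : int, (psiN p, psiN r)); (- ((q == r) : int), (psiN p, psiN s));
      (- ((p == r) : int), (s, q)); ((p == s) : int, (r, q))].

Lemma adMat_lform (k : fieldType) (Y : 'M[k]_8) (i j : 'I_28) :
  adMat Y i j = eval_lform Y (ad_lform i j).
Proof.
have inord_eq x y : (x < 8)%N -> (y < 8)%N -> ((inord x : 'I_8) == inord y) = (x == y).
  by move=> lt_x lt_y; rewrite -val_eqE /= !inordK.
case/andP: (soPairN_lt i) => lt_p lt_q; case/andP: (soPairN_lt j) => lt_r lt_s.
rewrite /adMat mxE !soPairE ad_soBasis_entry !psi_invE // !inord_eq //.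
by rewrite /eval_lform !big_cons big_nil addr0 /= !mulrNz !mulNr !addrA.
Qed.

Definition opp_term (t : term) : term := (- t.1, t.2).

Definition orient (t : term) : term :=
  let x := t.2.1 in let y := t.2.2 in
  if ((x < psiN y) || (x == psiN y) && (y <= psiN x))%N then t else (- t.1, (psiN y, psiN x)).

Definition in_range (t : term) : bool := (t.2.1 < 8)%N && (t.2.2 < 8)%N.

(* The terms of [l] not known to vanish cancel in pairs, once every v_xy is
   replaced by the chosen representative of {v_xy, - v_(psi y)(psi x)}. *)
Definition cancels (zero : nat -> nat -> bool) (l : lform) : bool :=
  let l' := [seq orient t | t <- l & (t.1 != 0) && ~~ zero t.2.1 t.2.2] in
  all in_range l && perm_eq l' (map opp_term l').

Lemma eval_lform_opp (k : fieldType) (Y : 'M[k]_8) l :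
  eval_lform Y (map opp_term l) = - eval_lform Y l.
Proof.
by rewrite /eval_lform big_map -sumrN; apply: eq_bigr => t _; rewrite mulrNz mulNr.
Qed.

Definition in_VbasisN (n : nat) : bool := ssignN (soPairN n).1 != ssignN (soPairN n).2.

Lemma card_Vbasis : #|[set i : 'I_28 | in_VbasisN i]| = 16%N.
Proof. by rewrite card_ord_count. Qed.

(* [grading] assigns a degree to each basis vector of so_8, and the kernel
   vector has coefficient 1 at [pivot] and [kernel_tail] below it. *)
Record certificate := Certificate {
  grading : seq nat;
  pivot : nat;
  kernel_tail : seq (int * nat) }.

Definition grade (c : certificate) (n : nat) : nat := nth 0%N (grading c) n.

Definition kernel_terms (c : certificate) : seq (int * nat) := (1%Z, pivot c) :: kernel_tail c.

Definition scale_lform (a : int) (l : lform) : lform := [seq (a * t.1, t.2) | t <- l].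

Definition kernel_lform (c : certificate) (j : nat) : lform :=
  flatten [seq if grade c t.2 == grade c j then scale_lform t.1 (ad_lform t.2 j) else [::]
          | t <- kernel_terms c].

Definition certifies (zero : nat -> nat -> bool) (c : certificate) : bool :=
  [&& (pivot c < 28)%N, all (fun t => t.2 < pivot c)%N (kernel_tail c),
      all (fun t => ~~ in_VbasisN t.2) (kernel_terms c),
      all (fun i => all (fun j =>
        ((grade c i < grade c j)%N || in_VbasisN i && in_VbasisN j) ==>
          cancels zero (ad_lform i j)) (iota 0 28)) (iota 0 28) &
      all (fun j => cancels zero (kernel_lform c j)) (iota 0 28)].

Lemma eval_scale_lform (k : fieldType) (Y : 'M[k]_8) a l :
  eval_lform Y (scale_lform a l) = a%:~R * eval_lform Y l.
Proof. by rewrite /eval_lform big_map mulr_sumr; apply: eq_bigr => t _; rewrite intrM mulrA. Qed.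

Section Certificate.
Variables (k : fieldType) (v : 'M[k]_8) (zero : nat -> nat -> bool).
Hypothesis two_neq0 : (2%:R : k) != 0.
Hypothesis v_zero : forall i j : 'I_8, zero i j -> v i j = 0.
Hypothesis v_antisym : forall i j : 'I_8, v i j = - v (psi_inv j) (psi_inv i).

Lemma eval_lform_filter l : all in_range l ->
  eval_lform v [seq t <- l | (t.1 != 0) && ~~ zero t.2.1 t.2.2] = eval_lform v l.
Proof.
move=> /allP l_range; rewrite /eval_lform big_filter.
rewrite [RHS](bigID (fun t : term => (t.1 != 0) && ~~ zero t.2.1 t.2.2)) /=.
rewrite [X in _ + X]big_seq_cond [X in _ + X]big1 ?addr0 // => t.
case/andP=> /l_range/andP[lt_x lt_y]; rewrite negb_and !negbK.
by case/orP=> [/eqP -> | zero_t]; rewrite ?mul0r // v_zero ?inordK ?mulr0.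
Qed.

Lemma eval_lform_orient l : all in_range l -> eval_lform v (map orient l) = eval_lform v l.
Proof.
move=> /allP l_range; rewrite /eval_lform big_map; apply: eq_big_seq => t.
case/l_range/andP=> lt_x lt_y; rewrite /orient; case: ifP => // _.
by rewrite [in RHS]v_antisym !psi_invE // mulrNz mulNr mulrN.
Qed.

Lemma cancels_eval_lform l : cancels zero l -> eval_lform v l = 0.
Proof.
case/andP=> l_range; set l' := map orient _ => perm_l'.
have l'E : eval_lform v l' = eval_lform v l.
  rewrite eval_lform_orient ?eval_lform_filter //.
  by apply/allP => t; rewrite mem_filter => /andP[_ /(allP l_range)].
rewrite -l'E; apply: eq_opp_eq0 two_neq0 _.
by rewrite -eval_lform_opp; apply: perm_big.
Qed.

Variable c : certificate.
Hypothesis c_certifies : certifies zero c.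

Let e (i : 'I_28) : nat := grade c i.

Definition kernel_row : 'rV[k]_28 := \row_j \sum_(t <- kernel_terms c | t.2 == j) t.1%:~R.

Lemma adMat_eq0 (i j : 'I_28) :
  (e i < e j)%N || in_VbasisN i && in_VbasisN j -> adMat v i j = 0.
Proof.
case/and5P: c_certifies => _ _ _ /all_iota_ord/(_ i)/all_iota_ord/(_ j)/implyP ad_cancels _.
by move/ad_cancels; rewrite adMat_lform => /cancels_eval_lform.
Qed.

Lemma kernel_terms_lt t : t \in kernel_terms c -> (t.2 <= pivot c < 28)%N.
Proof.
case/and5P: c_certifies => lt_pivot /allP tail_lt _ _ _.
by rewrite inE lt_pivot andbT => /orP[/eqP -> // | /tail_lt/ltnW].
Qed.

Lemma mul_kernel_row_graded_adMat j :
  (kernel_row *m graded_part e (adMat v)) 0 j = eval_lform v (kernel_lform c j).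
Proof.
rewrite mxE; under eq_bigr => l _ do rewrite mxE big_distrl big_mkcond /=.
rewrite exchange_big /eval_lform /kernel_lform big_flatten big_map /=.
apply: eq_big_seq => t /kernel_terms_lt/andP[le_t lt_pivot].
have lt_t : (t.2 < 28)%N := leq_ltn_trans le_t lt_pivot.
rewrite (bigD1 (inord t.2)) //= [X in _ + X]big1 => [|l ne_l]; last first.
  by rewrite ifN //; apply: contraNneq ne_l => ->; rewrite inord_val.
rewrite inordK // eqxx addr0 mxE /e inordK //.
case: ifP => _; last by rewrite mulr0 big_nil.
by rewrite adMat_lform inordK // -eval_scale_lform.
Qed.

Lemma kernel_row_mul_eq0 : kernel_row *m graded_part e (adMat v) = 0.
Proof.
apply/rowP => j; rewrite mul_kernel_row_graded_adMat mxE.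
case/and5P: c_certifies => _ _ _ _ /all_iota_ord/(_ j).
exact: cancels_eval_lform.
Qed.

Lemma Delta_eq0_of_certificate : Delta v = 0.
Proof.
case/and5P: c_certifies => lt_pivot /allP tail_lt /allP kernel_notV _ _.
pose i0 : 'I_28 := Ordinal lt_pivot.
have := @dvdp_char_poly_left_kernel _ _ _ [set i : 'I_28 | in_VbasisN i] _ i0 _
  kernel_row_mul_eq0.
rewrite card_Vbasis char_poly_graded_part => [|i j lt_ij]; last by rewrite adMat_eq0 ?lt_ij.
case/(_ _ _ _ _)/dvdpP => [i j | | j | j | q char_adE];
  last by rewrite /Delta char_adE coefMXn.
- by rewrite !inE mxE => Vi Vj; rewrite adMat_eq0 ?Vi ?Vj ?orbT ?if_same.
- rewrite mxE big_cons /= eqxx big1_seq ?addr0 ?oner_eq0 // => t /andP[/eqP eq_t].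
  by move/tail_lt; rewrite eq_t ltnn.
- rewrite inE mxE => Vj; rewrite big1_seq // => t /andP[/eqP eq_t /kernel_notV].
  by rewrite eq_t Vj.
- move=> lt_j; rewrite mxE big1_seq // => t /andP[/eqP eq_t /kernel_terms_lt].
  by rewrite eq_t leqNgt lt_j.
Qed.

End Certificate.

Definition eps_aN (m : nat) : rat := if (m <= 1)%N then 1/2 else 0.
Definition eps_bN (m : nat) : rat := if (2 <= m)%N then 1/2 else 0.
Definition eps_cN (m : nat) : rat :=
  if (m == 0)%N then 1/2 else if (m == 1)%N then -(1/2) else 0.
Definition eps_dN (m : nat) : rat :=
  if (m == 2)%N then 1/2 else if (m == 3)%N then -(1/2) else 0.

Definition chiN (x m : nat) : rat :=
  match x with
  | 0 => eps_aN m | 1 => eps_bN m | 2 => - eps_bN m | 3 => - eps_aN m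
  | 4 => eps_cN m | 5 => eps_dN m | 6 => - eps_dN m | _ => - eps_cN m
  end.

Definition wtN (x y m : nat) : rat := chiN x m - chiN y m.

Lemma wtE (i j : 'I_8) (m : 'I_4) : wt i j m = wtN i j m.
Proof. by rewrite ffunE. Qed.

Definition vanishing (P : (nat -> rat) -> bool) (x y : nat) : bool :=
  (ssignN x == ssignN y) || P (wtN x y).


Definition both_positive (m1 m2 : nat) (w : nat -> rat) : bool := (0 < w m1) && (0 < w m2).

Definition at_most_one_negative (w : nat -> rat) : bool :=
  (count (fun m => (w m < 0)%R) (iota 0 4) <= 1)%N.

Local Close Scope ring_scope.

Definition cert_pos (m1 m2 : nat) : certificate :=
  match m1, m2 with
  | 0, 1 => Certificate
      [:: 2; 2; 1; 2; 2; 2; 2; 1; 0; 1; 1; 1; 1; 0; 1; 1; 1; 1; 0; 0; 0; 0; 1; 1; 1; 1; 1; 1]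
      2 [::]
  | 0, 2 => Certificate
      [:: 2; 1; 1; 2; 2; 1; 1; 1; 1; 2; 2; 1; 1; 0; 1; 1; 0; 0; 1; 1; 0; 0; 2; 1; 1; 1; 1; 0]
      25 [:: (1%Z, 2); (1%Z, 7); (1%Z, 24)]
  | 0, 3 => Certificate
      [:: 2; 1; 1; 2; 1; 2; 1; 1; 1; 2; 1; 2; 1; 0; 1; 0; 1; 0; 1; 0; 1; 0; 1; 2; 1; 1; 0; 1]
      25 [:: ((-1)%Z, 2); ((-1)%Z, 7); ((-1)%Z, 24)]
  | 1, 2 => Certificate
      [:: 2; 1; 1; 1; 2; 1; 2; 1; 1; 1; 2; 1; 2; 0; 0; 1; 0; 1; 0; 1; 0; 1; 1; 0; 1; 1; 2; 1]
      25 [:: (1%Z, 2); (1%Z, 7); ((-1)%Z, 24)]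
  | 1, 3 => Certificate
      [:: 2; 1; 1; 1; 1; 2; 2; 1; 1; 1; 1; 2; 2; 0; 0; 0; 1; 1; 0; 0; 1; 1; 0; 1; 1; 1; 1; 2]
      25 [:: ((-1)%Z, 2); ((-1)%Z, 7); (1%Z, 24)]
  | 2, 3 => Certificate
      [:: 2; 0; 1; 1; 1; 1; 1; 1; 2; 2; 2; 2; 2; 0; 0; 0; 0; 0; 1; 1; 1; 1; 1; 1; 1; 1; 1; 1]
      7 [::]
  | _, _ => Certificate [::] 0 [::]
  end.

Definition cert_neg : certificate := Certificate
  [:: 4; 2; 2; 3; 3; 3; 3; 2; 2; 3; 3; 3; 3; 0; 1; 1; 1; 1; 1; 1; 1; 1; 2; 2; 2; 2; 2; 2]
  7 [:: (1%Z, 2)].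

Local Open Scope ring_scope.

Lemma certifies_pos m1 m2 : (m1 < m2 < 4)%N ->
  certifies (vanishing (both_positive m1 m2)) (cert_pos m1 m2).
Proof. by case: m1 m2 => [|[|[|[|?]]]] [|[|[|[|?]]]] /andP[] //; vm_compute. Qed.

Lemma certifies_neg : certifies (vanishing at_most_one_negative) cert_neg.
Proof. by vm_compute. Qed.

Section EntriesOfV.
Variables (k : fieldType) (v : 'M[k]_8).
Hypothesis vV : in_V v.

Lemma V_entry_antisym (i j : 'I_8) : v i j = - v (psi_inv j) (psi_inv i).
Proof.
case/andP: vV => /eqP so_v _.
have := congr1 (fun M : 'M[k]_8 => M j (psi_inv i)) so_v.
by rewrite /= mxE mul_mx_Psi mul_Psi_mx psi_invK !mxE => /eqP; rewrite addr_eq0 => /eqP.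
Qed.

Hypothesis two_neq0 : (2%:R : k) != 0.

Lemma V_entry_same_sign (i j : 'I_8) : ssign i = ssign j -> v i j = 0.
Proof.
case/andP: vV => _ /eqP s_v same_ij.
have := congr1 (fun M : 'M[k]_8 => M i j) s_v.
rewrite /= mul_mx_smat mul_smat_mx mxE same_ij mulrAC.
have -> : (if ssign j then 1 else -1) * (if ssign j then 1 else -1) = 1 :> k.
  by case: (ssign j); rewrite ?mulr1 // mulrNN mulr1.
by rewrite mul1r; apply: eq_opp_eq0.
Qed.

Lemma V_entry_eq0 (P : (nat -> rat) -> bool) (PW : weight -> Prop) :
  (forall i j : 'I_8, P (wtN i j) -> PW (wt i j)) ->
  (forall a, PhiV a -> PW a -> wcomp a v = 0) ->
  forall i j : 'I_8, vanishing P i j -> v i j = 0.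
Proof.
move=> PW_of_P v_PW i j /orP[/eqP same | Pij]; first exact: V_entry_same_sign.
have [same | diff] := eqVneq (ssign i) (ssign j); first exact: V_entry_same_sign.
have PhiV_ij : PhiV (wt i j).
  by apply/existsP; exists i; apply/existsP; exists j; rewrite diff eqxx.
have := congr1 (fun M : 'M[k]_8 => M i j) (v_PW _ PhiV_ij (PW_of_P i j Pij)).
by rewrite !mxE eqxx.
Qed.

Lemma Delta_eq0_pos (m1 m2 : 'I_4) : (m1 < m2)%N ->
  (forall a, PhiV a -> (forall i, i \in [set m1; m2] -> (0 : rat) < a i) -> wcomp a v = 0) ->
  Delta v = 0.
Proof.
move=> lt_m12 v_pos.
have cert := certifies_pos (m1 := m1) (m2 := m2); rewrite lt_m12 ltn_ord in cert.
apply: (Delta_eq0_of_certificate two_neq0 _ V_entry_antisym (cert isT)).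
apply: (V_entry_eq0 _ v_pos) => i j /andP[pos1 pos2] m.
by rewrite !inE => /orP[] /eqP ->; rewrite wtE.
Qed.

Lemma Delta_eq0_neg :
  (forall a, PhiV a -> (#|[set i | (a i < 0)%R]| <= 1)%N -> wcomp a v = 0) -> Delta v = 0.
Proof.
move=> v_neg; apply: (Delta_eq0_of_certificate two_neq0 _ V_entry_antisym certifies_neg).
apply: (V_entry_eq0 _ v_neg) => i j.
rewrite /at_most_one_negative -card_ord_count.
by under eq_finset => m do rewrite -wtE.
Qed.

End EntriesOfV.

Theorem lemma3p2 (k : fieldType) (p : nat) :
  prime p -> p \in [pchar k] -> p != 2%N -> p != 3%N ->
  forall v : 'M[k]_8, in_V v ->
  (forall S : {set 'I_4}, #|S| = 2%N ->
     (forall a : weight, PhiV a -> (forall i, i \in S -> (0 : rat) < a i) ->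
        wcomp a v = 0) ->
     Delta v = 0)
  /\
  ((forall a : weight, PhiV a -> (#|[set i | (a i < 0)%R]| <= 1)%N ->
        wcomp a v = 0) ->
   Delta v = 0).
Proof.
move=> p_prime p_char p_neq2 _ v vV.
have two_neq0 : (2%:R : k) != 0 by rewrite -(dvdn_pcharf p_char) dvdn_prime2.
split=> [S /eqP/cards2P[m1 [m2 [m1_neq_m2 ->]]] | ]; last exact: Delta_eq0_neg.
case: (ltngtP m1 m2) => [lt_m12 | lt_m21 | /val_inj eq_m12].
- exact: Delta_eq0_pos.
- by rewrite setUC; apply: Delta_eq0_pos.
- by rewrite eq_m12 eqxx in m1_neq_m2.
Qed.
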